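(* Let $k\ge 2$ and $m\ge 5$ be integers and let $G$ be the complete $k$-partite graph $K(m,2,\ldots,2)$ (one part of size $m$ and $k-1$ parts of size $2$). Then $h(G)=ch(G)\ge k+1$.
   Context: All graphs are finite and simple. A list assignment $L$ to a graph $G$ assigns a finite set $L(v)$ to each vertex $v$; a proper $L$-coloring is a map $\psi$ with $\psi(v)\in L(v)$ for all $v$ and $\psi(u)\ne\psi(v)$ for every edge $uv$. The choice number $ch(G)$ is the least $k$ such that $G$ is properly $L$-colorable whenever $|L(v)|\ge k$ for all $v$. For a subgraph $H$ of $G$ and a color $\sigma$, let $H_\sigma$ denote the subgraph of $H$ induced by $\{v\in V(H):\sigma\in L(v)\}$, and let $\alpha$ denote the independence number (with $\alpha$ of the null graph equal to $0$). $G$ and $L$ satisfy Hall's condition if $\sum_{\sigma}\alpha(H_\sigma)\ge |V(H)|$ for every subgraph $H$ of $G$, the sum being over all colors. The Hall number $h(G)$ is the smallest positive integer $k$ such that $G$ has a proper $L$-coloring whenever $G$ and $L$ satisfy Hall's condition and $|L(v)|\ge k$ for every $v\in V(G)$. *)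

From mathcomp Require Import all_boot.
Set Implicit Arguments. Unset Strict Implicit. Unset Printing Implicit Defensive.

(* Colors are natural numbers; a list assignment L assigns a finite list of
   colors to each vertex; L(v) is read as the set of its elements, so
   |L(v)| = size (undup (L v)). *)

Definition simple_graph (V : finType) (e : rel V) : Prop :=
  symmetric e /\ irreflexive e.

Definition list_assignment (V : finType) := V -> seq nat.

Definition list_size (V : finType) (L : list_assignment V) (v : V) : nat :=
  size (undup (L v)).

Definition L_colorable (V : finType) (e : rel V) (L : list_assignment V) : Prop :=
  exists psi : V -> nat,
    (forall v, psi v \in L v) /\ (forall x y, e x y -> psi x != psi y).

Definition choosable (V : finType) (e : rel V) (k : nat) : Prop :=
  forall L : list_assignment V, (forall v, k <= list_size L v) -> L_colorable e L.

Definition is_choice_number (V : finType) (e : rel V) (c : nat) : Prop :=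
  choosable e c /\ forall k, choosable e k -> c <= k.

Definition is_subgraph (V : finType) (e : rel V) (S : {set V}) (eH : rel V) : Prop :=
  forall x y, eH x y -> [&& e x y, x \in S & y \in S].

Definition independent (V : finType) (r : rel V) (I : {set V}) : bool :=
  [forall x in I, forall y in I, ~~ r x y].

Definition alpha (V : finType) (r : rel V) (A : {set V}) : nat :=
  \max_(I : {set V} | (I \subset A) && independent r I) #|I|.

(* all colors occurring in L (colors outside contribute alpha(null graph) = 0) *)
Definition colors (V : finType) (L : list_assignment V) : seq nat :=
  undup (flatten [seq L v | v <- enum V]).

Definition Hsigma (V : finType) (L : list_assignment V) (S : {set V}) (sigma : nat)
  : {set V} := [set v in S | sigma \in L v].

Definition hall_condition (V : finType) (e : rel V) (L : list_assignment V) : Prop :=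
  forall (S : {set V}) (eH : rel V), is_subgraph e S eH ->
    \sum_(sigma <- colors L) alpha eH (Hsigma L S sigma) >= #|S|.

Definition hall_good (V : finType) (e : rel V) (k : nat) : Prop :=
  forall L : list_assignment V, hall_condition e L ->
    (forall v, k <= list_size L v) -> L_colorable e L.

Definition is_hall_number (V : finType) (e : rel V) (h : nat) : Prop :=
  0 < h /\ hall_good e h /\ forall k, 0 < k -> hall_good e k -> h <= k.

Definition Kpart_vertex (m k : nat) : finType := ('I_m + ('I_k.-1 * 'I_2))%type.

Definition Kpart_part (m k : nat) (x : Kpart_vertex m k) : nat :=
  match x with inl _ => 0 | inr p => (nat_of_ord p.1).+1 end.

Definition Kpart_edge (m k : nat) : rel (Kpart_vertex m k) :=
  fun x y => Kpart_part x != Kpart_part y.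

From mathcomp Require Import all_boot zify.
From Stdlib Require Import Classical Wf_nat.
Set Implicit Arguments. Unset Strict Implicit. Unset Printing Implicit Defensive.

(* On a graph whose vertices are split into n independent parts, lists of size
   at least n always satisfy Hall's condition: each H_sigma splits along the
   parts into n independent sets, so |H_sigma| <= n alpha(H_sigma), and summing
   over sigma gives n |S| <= sum |H_sigma| <= n sum alpha(H_sigma). Hence the
   Hall number equals the choice number as soon as some lists of size n admit
   no coloring (sizes below n cannot be Hall-good, since this is monotone).
   For K(m,2,...,2) give the two vertices of each 2-part the colors [0,k) and
   [k,2k) respectively: a proper coloring leaves free exactly one color s of
   the first block and one color t of the second on the big part, and five
   lists of size k inside [0,2k) ensure that one vertex of the big part sees
   neither s nor t. *)

Section ListColoring.

Variables (V : finType) (e : rel V).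

Lemma choosable_mono a b : a <= b -> choosable e a -> choosable e b.
Proof. by move=> leab cha L HL; apply: cha => v; apply: leq_trans leab (HL v). Qed.

Lemma hall_good_mono a b : a <= b -> hall_good e a -> hall_good e b.
Proof. by move=> leab ha L hallL HL; apply: ha => // v; apply: leq_trans leab (HL v). Qed.

Lemma injective_list_coloring (L : list_assignment V) (s : seq V) :
  uniq s -> {in s, forall v, size s <= list_size L v} ->
  exists2 psi : V -> nat, {in s, forall v, psi v \in L v} & {in s &, injective psi}.
Proof.
elim: s => [|x s IHs] /=; first by exists (fun=> 0).
case/andP=> _ uniq_s HL.
have [psi psiL psi_inj] : exists2 psi : V -> nat,
    {in s, forall v, psi v \in L v} & {in s &, injective psi}.
  by apply: IHs => // v vs; apply: ltnW (HL v _); rewrite inE vs orbT.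
have : ~~ all (fun c => c \in map psi s) (undup (L x)).
  apply/negP => /allP/(uniq_leq_size (undup_uniq _)).
  by rewrite size_map; have := HL x; rewrite inE eqxx /list_size; lia.
case/allPn => c cLx cNpsi.
exists (fun v => if v == x then c else psi v).
  by move=> v; rewrite inE; case: eqP => [-> _|_ /psiL //]; rewrite -mem_undup.
move=> u v; rewrite !inE.
case: (eqVneq u x) => [->|ux]; case: (eqVneq v x) => [->|vx] //= us vs.
- by move=> E; case/negP: cNpsi; rewrite E map_f.
- by move=> E; case/negP: cNpsi; rewrite -E map_f.
- exact: psi_inj.
Qed.

Lemma choosable_card : irreflexive e -> choosable e #|V|.
Proof.
move=> irr_e L HL.
have [psi psiL psi_inj] : exists2 psi : V -> nat,
    {in enum V, forall v, psi v \in L v} & {in enum V &, injective psi}.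
  by apply: injective_list_coloring (enum_uniq _) _ => v _; rewrite -cardE.
exists psi; split => [v|x y exy]; first by rewrite psiL ?mem_enum.
apply: contraTneq exy => /psi_inj; rewrite !mem_enum => /(_ isT isT) ->.
by rewrite irr_e.
Qed.

Lemma exists_choice_number : irreflexive e -> exists c, is_choice_number e c.
Proof.
move=> irr_e.
have [c [[chc minc] _]] := @dec_inh_nat_subset_has_unique_least_element
  (choosable e) (fun n => classic _) (ex_intro _ _ (choosable_card irr_e)).
by exists c; split=> // j /minc /leP.
Qed.

Lemma leq_card_alpha (r : rel V) (A I : {set V}) :
  I \subset A -> independent r I -> #|I| <= alpha r A.
Proof. by move=> sIA indI; apply: (leq_bigmax_cond I); rewrite sIA indI. Qed.

Lemma list_size_le_count_colors (L : list_assignment V) v :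
  list_size L v <= count (mem (L v)) (colors L).
Proof.
rewrite -size_filter; apply: uniq_leq_size (undup_uniq _) _ => c.
rewrite mem_undup mem_filter => cLv; rewrite /= cLv /colors mem_undup.
by apply/flattenP; exists (L v); rewrite // map_f ?mem_enum.
Qed.

Lemma card_Hsigma (L : list_assignment V) S sg :
  #|Hsigma L S sg| = \sum_(v in S) (sg \in L v).
Proof. by rewrite -sum1dep_card big_mkcondr. Qed.

Lemma hall_condition_multipartite n (part : V -> 'I_n) (L : list_assignment V) :
  (forall x y, e x y -> part x != part y) -> (forall v, n <= list_size L v) ->
  hall_condition e L.
Proof.
move=> part_e HL S eH sub_eH.
have [->|[v0 _]] := set_0Vmem S; first by rewrite cards0.
have n_gt0 : 0 < n := leq_ltn_trans (leq0n _) (ltn_ord (part v0)).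
have card_le_alpha sg : #|Hsigma L S sg| <= n * alpha eH (Hsigma L S sg).
  rewrite -sum1_card (partition_big part predT) //= -[n in n * _]card_ord.
  rewrite -sum_nat_const; apply: leq_sum => r _; rewrite sum1dep_card.
  apply: leq_card_alpha; first by apply/subsetP => v; rewrite inE => /andP[].
  apply/forall_inP => x; rewrite inE => /andP[_ /eqP xr].
  apply/forall_inP => y; rewrite inE => /andP[_ /eqP yr].
  apply: contraL (eqxx r) => /sub_eH/and3P[/part_e + _ _].
  by rewrite xr yr.
have sum_card_Hsigma : n * #|S| <= \sum_(sg <- colors L) #|Hsigma L S sg|.
  under eq_bigr do rewrite card_Hsigma.
  rewrite exchange_big /= mulnC -sum_nat_const; apply: leq_sum => v _.
  rewrite (leq_trans (HL v)) // (leq_trans (list_size_le_count_colors L v)) //.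
  by rewrite -sum1_count big_mkcond.
rewrite -(leq_pmul2l n_gt0) (leq_trans sum_card_Hsigma) // big_distrr.
exact: leq_sum.
Qed.

Lemma choice_hall_number_gt k :
  irreflexive e ->
  (forall L, (forall v, k <= list_size L v) -> hall_condition e L) ->
  (exists2 L, forall v, k <= list_size L v & ~ L_colorable e L) ->
  exists c, is_choice_number e c /\ is_hall_number e c /\ k.+1 <= c.
Proof.
move=> irr_e hall_k [L0 L0k L0N].
have [c [chc minc]] := exists_choice_number irr_e.
have ltkc : k < c.
  by rewrite ltnNge; apply/negP => /choosable_mono/(_ chc) chk; apply/L0N/chk.
exists c; split=> //; split=> //; split; first exact: leq_ltn_trans ltkc.
split=> [L _|j _ hall_j]; first exact: chc.
have [lekj|ltjk] := leqP k j.
  apply: minc => L HL; apply: (hall_j L _ HL); apply: hall_k => v.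
  exact: leq_trans lekj (HL v).
by case: L0N; apply: (hall_good_mono (ltnW ltjk) hall_j) => //; apply: hall_k.
Qed.

End ListColoring.

Lemma missing_value (T : eqType) n (f : 'I_n -> T) (r : seq T) :
  injective f -> uniq r -> size r = n.+1 -> (forall j, f j \in r) ->
  exists2 s, s \in r & {in r, forall c, c != s -> c \in codom f}.
Proof.
move=> f_inj uniq_r size_r f_r.
have uniq_f : uniq (codom f) by rewrite codomE map_inj_uniq ?enum_uniq.
have sub_f : {subset codom f <= r} by move=> _ /codomP[j ->].
have : ~~ all (fun c => c \in codom f) r.
  apply/negP => /allP/(uniq_leq_size uniq_r).
  by rewrite size_r size_codom card_ord ltnn.
case/allPn => s r_s sNf; exists s => // c r_c cs; apply/negPn/negP => cNf.
have uniq_scf : uniq [:: s, c & codom f] by rewrite /= inE negb_or eq_sym cs sNf cNf.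
have sub_scf : {subset [:: s, c & codom f] <= r}.
  by apply/allP; rewrite /= r_s r_c; apply/allP.
have := uniq_leq_size uniq_scf sub_scf.
by rewrite /= size_codom card_ord size_r ltnn.
Qed.

Lemma uniq_iota_cat a n s : uniq s -> all (leq (a + n)) s -> uniq (iota a n ++ s).
Proof.
move=> uniq_s /allP s_ge; rewrite cat_uniq iota_uniq uniq_s andbT.
by apply/hasPn => c /s_ge; rewrite mem_iota; lia.
Qed.

Lemma all_leq_iota a b n : a <= b -> all (leq a) (iota b n).
Proof. by move=> leab; apply/allP => c; rewrite mem_iota; lia. Qed.

(* With p = k/2 and q = k - p, split [0,k) = A1 ++ A2 and [k,2k) = B1 ++ B2
   with |A1| = |B2| = p. The lists are A2 B2, A1 B1, A2 B1, then A1 B2 plus the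
   last color of B1, and A1 B1 B2 minus that color: wherever s and t lie, one
   of them avoids both (the last two are needed because 2p may be k - 1). *)
Definition trap_list (k i : nat) : seq nat :=
  let p := k./2 in let q := k - p in
  match i with
  | 0 => iota p q ++ iota (k + q) p
  | 1 => iota 0 p ++ iota k q
  | 2 => iota p q ++ iota k q
  | 3 => iota 0 p ++ iota (k + q).-1 p.+1
  | _ => iota 0 p ++ iota k q.-1 ++ iota (k + q) p
  end.

Lemma trap_list_uniq k i : uniq (trap_list k i).
Proof.
rewrite /trap_list.
do 4 (case: i => [|i]; first by rewrite uniq_iota_cat ?iota_uniq ?all_leq_iota //; lia).
by rewrite !uniq_iota_cat ?iota_uniq ?all_cat ?all_leq_iota //; lia.
Qed.

Lemma trap_list_size k i : 2 <= k -> k <= size (trap_list k i).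
Proof.
move=> hk; rewrite /trap_list.
do 4 (case: i => [|i]; first by rewrite size_cat !size_iota; lia).
by rewrite !size_cat !size_iota; lia.
Qed.

Lemma trap_list_avoids k s t : 2 <= k -> s < k -> k <= t < k + k ->
  exists2 i, i < 5 & {in trap_list k i, forall c, [&& c < k + k, c != s & c != t]}.
Proof.
move=> hk ltsk /andP[lekt ltt2k]; rewrite /trap_list.
have [ltsp|lesp] := ltnP s k./2; have [lttq|letq] := ltnP t (k + (k - k./2)).
- by exists 0 => // c; rewrite mem_cat !mem_iota; lia.
- by exists 2 => // c; rewrite mem_cat !mem_iota; lia.
- have [lttq'|letq'] := ltnP t (k + (k - k./2)).-1.
    by exists 3 => // c; rewrite mem_cat !mem_iota; lia.
  by exists 4 => // c; rewrite !mem_cat !mem_iota; lia.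
- by exists 1 => // c; rewrite mem_cat !mem_iota; lia.
Qed.

Section CompleteMultipartite.

Variables m k : nat.

Local Notation G := (@Kpart_edge m k).

Definition Kpart_part_ord (x : Kpart_vertex m k) : 'I_k.-1.+1 :=
  if x is inr p then lift ord0 p.1 else ord0.

Lemma Kpart_edgeE x y : G x y = (Kpart_part_ord x != Kpart_part_ord y).
Proof. by case: x y => [i|[a b]] [j|[c d]]; rewrite /Kpart_edge -val_eqE /= ?lift0. Qed.

Lemma Kpart_edge_irreflexive : irreflexive G.
Proof. by move=> x; rewrite /Kpart_edge eqxx. Qed.

Lemma hall_condition_Kpart (L : list_assignment (Kpart_vertex m k)) :
  0 < k -> (forall v, k <= list_size L v) -> hall_condition G L.
Proof.
move=> k_gt0 HL; apply: (hall_condition_multipartite (part := Kpart_part_ord)).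
  by move=> x y; rewrite Kpart_edgeE.
by move=> v; rewrite prednK.
Qed.

Definition bad_assignment : list_assignment (Kpart_vertex m k) :=
  fun v => match v with
           | inl i => trap_list k i
           | inr (_, b) => iota (b * k) k
           end.

Lemma bad_assignment_size v : 2 <= k -> k <= list_size bad_assignment v.
Proof.
move=> hk; rewrite /list_size; case: v => [i|[_ b]] /=.
  by rewrite undup_id ?trap_list_uniq ?trap_list_size.
by rewrite undup_id ?iota_uniq ?size_iota.
Qed.

Section Coloring.

Variable psi : Kpart_vertex m k -> nat.
Hypothesis psi_L : forall v, psi v \in bad_assignment v.
Hypothesis psi_proper : forall x y, G x y -> psi x != psi y.

Lemma bad_assignment_block_color (b : 'I_2) : 0 < k ->
  exists2 s, s \in iota (b * k) k &
    forall i, psi (inl i) \in iota (b * k) k -> psi (inl i) = s.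
Proof.
move=> k_gt0; pose f (j : 'I_k.-1) := psi (inr (j, b)).
have f_inj : injective f.
  move=> j1 j2 /eqP; apply: contraTeq => j12.
  by apply: psi_proper; rewrite /Kpart_edge /= eqSS.
have [|s r_s f_s] := missing_value f_inj (iota_uniq _ _) _ (fun j => psi_L _).
  by rewrite size_iota prednK.
exists s => // i r_i; apply/eqP; apply: contraT => i_s.
have /codomP[j fj] := f_s _ r_i i_s.
by have := @psi_proper (inl i) (inr (j, b)) isT; rewrite fj eqxx.
Qed.

End Coloring.

Lemma bad_assignment_not_colorable : 2 <= k -> 5 <= m -> ~ L_colorable G bad_assignment.
Proof.
move=> hk hm [psi [psi_L psi_proper]]; have k_gt0 : 0 < k by lia.
have [s] := bad_assignment_block_color psi_L psi_proper ord0 k_gt0.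
rewrite mem_iota /= => r_s side_s.
have [t] := bad_assignment_block_color psi_L psi_proper ord_max k_gt0.
rewrite mem_iota /= => r_t side_t.
have [i lti5 avoid] : exists2 i, i < 5 &
    {in trap_list k i, forall c, [&& c < k + k, c != s & c != t]}.
  by apply: trap_list_avoids; lia.
pose i' : 'I_m := Ordinal (leq_trans lti5 hm).
have /and3P[lt2k i's i't] := avoid _ (psi_L (inl i')).
have [ltk|gek] := ltnP (psi (inl i')) k.
  by move/eqP: i's; apply; apply: side_s; rewrite mem_iota /= mul0n add0n.
by move/eqP: i't; apply; apply: side_t; rewrite mem_iota /= mul1n; apply/andP.
Qed.

End CompleteMultipartite.

Theorem corollaryD (k m : nat) (hk : 2 <= k) (hm : 5 <= m) :
  exists c : nat,
    is_choice_number (@Kpart_edge m k) c /\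
    is_hall_number (@Kpart_edge m k) c /\
    k.+1 <= c.
Proof.
apply: choice_hall_number_gt (@Kpart_edge_irreflexive m k) _ _.
  by move=> L; apply: hall_condition_Kpart; lia.
exists (@bad_assignment m k); first by move=> v; apply: bad_assignment_size.
exact: bad_assignment_not_colorable.
Qed.
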